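(* Let $n\ge1$. Then $Inn(Q_n)$ is an elementary abelian $2$-group of order $2^{2^n-2}$. Moreover, every $f\in Inn(Q_n)$ is a product of disjoint transpositions of the form $(x,-x)$, $x\in Q_n$.
   Context: Cayley--Dickson loops: $Q_0=\{1,-1\}\subset\mathbb{R}$ with conjugation $x^*=x$. For $n\ge1$, $Q_n=\{(x,0),(x,1)\mid x\in Q_{n-1}\}$ with multiplication $(x,0)(y,0)=(xy,0)$, $(x,0)(y,1)=(yx,1)$, $(x,1)(y,0)=(xy^*,1)$, $(x,1)(y,1)=(-y^*x,0)$ and conjugation $(x,0)^*=(x^*,0)$, $(x,1)^*=(-x,1)$, where $-(x,a)=(-x,a)$. $Q_n$ is a loop of order $2^{n+1}$ with neutral element $1=(1,0,\dots,0)$; $-1=(-1,0,\dots,0)$ and $-x=(-1)x$. For a loop $Q$, $L_x(a)=xa$, $R_x(a)=ax$, $Mlt(Q)=\langle L_x,R_x\mid x\in Q\rangle$ and $Inn(Q)=\{f\in Mlt(Q)\mid f(1)=1\}$. *)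

From HB Require Import structures.
From mathcomp Require Import all_boot all_order all_fingroup all_solvable.
Set Implicit Arguments. Unset Strict Implicit. Unset Printing Implicit Defensive.

(* Q_0 = {1,-1} is encoded by bool (false = 1, true = -1);
   Q_{n+1} = Q_n * bool, the element (x, a) with a in {0,1} encoded as
   (x, false) for a = 0 and (x, true) for a = 1. *)
Fixpoint CD (n : nat) : finType :=
  match n with
  | 0 => bool
  | m.+1 => (CD m * bool)%type
  end.

Fixpoint CDneg (n : nat) : CD n -> CD n :=
  match n return CD n -> CD n with
  | 0 => fun x => ~~ x
  | m.+1 => fun x => (CDneg x.1, x.2)
  end.

Fixpoint CDconj (n : nat) : CD n -> CD n :=
  match n return CD n -> CD n with
  | 0 => fun x => x
  | m.+1 => fun x => if x.2 then (CDneg x.1, true) else (CDconj x.1, false)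
  end.

Fixpoint CDmul (n : nat) : CD n -> CD n -> CD n :=
  match n return CD n -> CD n -> CD n with
  | 0 => fun x y => x (+) y   (* sign multiplication in {1,-1} *)
  | m.+1 => fun xa yb =>
      let x := xa.1 in let y := yb.1 in
      match xa.2, yb.2 with
      | false, false => (CDmul x y, false)
      | false, true  => (CDmul y x, true)
      | true,  false => (CDmul x (CDconj y), true)
      | true,  true  => (CDneg (CDmul (CDconj y) x), false)
      end
  end.

Fixpoint CDone (n : nat) : CD n :=
  match n return CD n with
  | 0 => false
  | m.+1 => (CDone m, false)
  end.

(* The generators L_x, R_x of Mlt(Q_n), as permutations of Q_n.
   (Q_n is a loop, so every L_x, R_x is a bijection; a permutation p
   belongs to this set iff p is (extensionally) some L_x or some R_x.) *)
Definition mlt_gens (n : nat) : {set {perm CD n}} :=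
  [set p : {perm CD n} |
     [exists x : CD n, [forall a : CD n, p a == CDmul x a]]
  || [exists x : CD n, [forall a : CD n, p a == CDmul a x]]].

Definition Mlt (n : nat) : {set {perm CD n}} := (<<mlt_gens n>>)%g.

Definition Inn (n : nat) : {set {perm CD n}} :=
  [set f in Mlt n | f (CDone n) == CDone n].

From HB Require Import structures.
From mathcomp Require Import all_boot all_order all_fingroup all_solvable.
Set Implicit Arguments. Unset Strict Implicit. Unset Printing Implicit Defensive.

(* Every x in Q_n is +-e for a positive e determined by the index of x (its
   coordinates in {0,1}^n); indices multiply additively, and two elements
   commute when one of them is real (+-1) or they agree up to sign, and
   anticommute otherwise.

   The sign parity of f (the parity of the number of positive a
   with f a negative) is a homomorphism to Z/2 on permutations commuting with
   negation, and for n >= 2 it vanishes on every translation L_x, R_x.  Hence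
   every element of Mlt(Q_n) commutes with negation, translates indices and has
   even sign parity, so an inner mapping sends each a to +-a and is the flip
   (product of the transpositions (a, -a)) of an even set of positive non-real
   elements.  For n = 1, Mlt(Q_1) consists of left translations and Inn(Q_1) = 1.

   Lower bound.  T_x = L_x^-1 R_x negates exactly the elements anticommuting
   with x, and the product of the T_x over an even set S of positive non-real
   elements is the flip of S.

   So Inn(Q_n) is in bijection with the even subsets of the 2^n - 1 positive
   non-real elements, which gives its order 2^(2^n - 2); it is elementary
   abelian since its elements fix every pair {a, -a}. *)

Fixpoint CDsign (n : nat) : CD n -> bool :=
  match n return CD n -> bool with
  | 0 => fun x => x
  | m.+1 => fun x => CDsign x.1
  end.

(* The index of x, i.e. x up to sign: its coordinates in {0,1}^n. *)
Fixpoint CDIdx (n : nat) : finType :=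
  match n with
  | 0 => unit
  | m.+1 => (CDIdx m * bool)%type
  end.

Fixpoint CDidx (n : nat) : CD n -> CDIdx n :=
  match n return CD n -> CDIdx n with
  | 0 => fun _ => tt
  | m.+1 => fun x => (CDidx x.1, x.2)
  end.

Fixpoint CDidx_add (n : nat) : CDIdx n -> CDIdx n -> CDIdx n :=
  match n return CDIdx n -> CDIdx n -> CDIdx n with
  | 0 => fun _ _ => tt
  | m.+1 => fun i j => (CDidx_add i.1 j.1, i.2 (+) j.2)
  end.

Definition CDreal n (x : CD n) := CDidx x == CDidx (CDone n).

Section Arithmetic.
Variable n : nat.
Implicit Types x y a : CD n.

Lemma CDnegK : involutive (@CDneg n).
Proof. by elim: n => [|m IH] [] //= u b; rewrite IH. Qed.

Lemma CDneg_inj : injective (@CDneg n).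
Proof. exact: inv_inj CDnegK. Qed.

Lemma CDneg_eq a x : (CDneg a == x) = (a == CDneg x).
Proof. by rewrite -{1}(CDnegK x) (inj_eq CDneg_inj). Qed.

Lemma CDsign_neg x : CDsign (CDneg x) = ~~ CDsign x.
Proof. by elim: n x => [|m IH] [] //= u b; rewrite IH. Qed.

Lemma CDneg_neq x : (CDneg x == x) = false.
Proof. by apply/eqP=> h; move: (CDsign_neg x); rewrite h; case: (CDsign x). Qed.

Lemma CDidx_neg x : CDidx (CDneg x) = CDidx x.
Proof. by elim: n x => [|m IH] // [u b] /=; rewrite IH. Qed.

Lemma CDreal_neg x : CDreal (CDneg x) = CDreal x.
Proof. by rewrite /CDreal CDidx_neg. Qed.

Lemma CDidxP x y : CDidx x = CDidx y -> y = x \/ y = CDneg x.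
Proof.
elim: n x y => [|m IH] /=; first by do 2 case; auto.
by move=> [u b] [v c] /= [/IH [->|->] ->]; auto.
Qed.

Lemma CDidx_eq a x : (CDidx a == CDidx x) = (a == x) || (a == CDneg x).
Proof.
apply/eqP/orP => [/esym/CDidxP [->|->]|[/eqP->|/eqP->]]; rewrite ?CDidx_neg; auto.
Qed.

Lemma CDidx_addC : commutative (@CDidx_add n).
Proof. by elim: n => [|m IH] // [i b] [j c] /=; rewrite IH addbC. Qed.

Lemma CDidx_addA : associative (@CDidx_add n).
Proof. by elim: n => [|m IH] // [i b] [j c] [k d] /=; rewrite IH addbA. Qed.

Lemma CDidx_add1 : left_id (CDidx (CDone n)) (@CDidx_add n).
Proof. by elim: n => [|m IH] [] //= i b; rewrite IH. Qed.

Lemma CDconjE x : CDconj x = if CDreal x then x else CDneg x.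
Proof.
elim: n x => [|m IH] //= [u [|]] /=; rewrite /CDreal /= xpair_eqE ?andbF ?andbT //.
rewrite IH /CDreal; by case: ifP.
Qed.

Lemma CDidx_conj x : CDidx (CDconj x) = CDidx x.
Proof. by rewrite CDconjE; case: ifP; rewrite ?CDidx_neg. Qed.

Lemma CDconjN x : CDconj (CDneg x) = CDneg (CDconj x).
Proof. by rewrite !CDconjE CDreal_neg; case: ifP. Qed.

Lemma CDconjK : involutive (@CDconj n).
Proof. by move=> x; rewrite (CDconjE x); case: ifP => h; rewrite ?CDconjN CDconjE ?h ?CDnegK. Qed.

Lemma CDconj_inj : injective (@CDconj n).
Proof. exact: inv_inj CDconjK. Qed.

Lemma CDconj1 : CDconj (CDone n) = CDone n.
Proof. by rewrite CDconjE /CDreal eqxx. Qed.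

End Arithmetic.

Lemma CDmulN_both n (x y : CD n) :
  CDmul x (CDneg y) = CDneg (CDmul x y) /\ CDmul (CDneg x) y = CDneg (CDmul x y).
Proof.
elim: n x y => [|m IH] /=; first by do 2 case.
by move=> [u [|]] [v [|]] /=; rewrite ?CDconjN ?(IH _ _).1 ?(IH _ _).2 ?CDnegK.
Qed.

Lemma CDmulN n (x y : CD n) : CDmul x (CDneg y) = CDneg (CDmul x y).
Proof. exact: (CDmulN_both x y).1. Qed.

Lemma CDmulNl n (x y : CD n) : CDmul (CDneg x) y = CDneg (CDmul x y).
Proof. exact: (CDmulN_both x y).2. Qed.

Lemma CDidx_mul n (x y : CD n) : CDidx (CDmul x y) = CDidx_add (CDidx x) (CDidx y).
Proof.
elim: n x y => [|m IH] //= [u [|]] [v [|]] /=;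
  by rewrite ?CDidx_neg IH ?CDidx_conj // CDidx_addC.
Qed.

Lemma CDmul1_both n (x : CD n) : CDmul (CDone n) x = x /\ CDmul x (CDone n) = x.
Proof.
elim: n x => [|m IH] /=; first by case.
by move=> [u [|]] /=; rewrite ?CDconj1 ?(IH _).1 ?(IH _).2.
Qed.

Lemma CDmul1 n (x : CD n) : CDmul (CDone n) x = x.
Proof. exact: (CDmul1_both x).1. Qed.

Lemma CDmulx1 n (x : CD n) : CDmul x (CDone n) = x.
Proof. exact: (CDmul1_both x).2. Qed.

Lemma CDmul_inj_both n (x : CD n) :
  injective (CDmul x) /\ injective (fun y => CDmul y x).
Proof.
elim: n x => [|m IH] /=; first by move=> x; split=> a b /= /eqP; case: x a b => [] [] [].
move=> [u [|]]; split; move=> [v [|]] [w [|]] //= [];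
  try move/CDneg_inj; try move/(IH _).1; try move/(IH _).2;
  try move/CDconj_inj; by move=> ->.
Qed.

Definition CDcommute n (x a : CD n) := [|| CDreal a, CDreal x | CDidx a == CDidx x].

Lemma CDcommute_neg n (x a : CD n) : CDcommute x (CDneg a) = CDcommute x a.
Proof. by rewrite /CDcommute CDreal_neg CDidx_neg. Qed.

Lemma CDreal_pair m (u : CD m) b : CDreal ((u, b) : CD m.+1) = CDreal u && ~~ b.
Proof. by rewrite /CDreal /= xpair_eqE; case: b; rewrite ?andbT ?andbF. Qed.

Lemma CDmul_comm n (x a : CD n) :
  CDmul a x = if CDcommute x a then CDmul x a else CDneg (CDmul x a).
Proof.
elim: n x a => [|m IH] /=; first by do 2 case.
move=> [u [|]] [v [|]] /=;
  rewrite /CDcommute !CDreal_pair /= ?xpair_eqE ?andbT ?andbF ?orbF /=.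
-
  rewrite !CDconjE /CDreal.
  case hu: (CDidx u == CDidx (CDone m)); case hv: (CDidx v == CDidx (CDone m));
  case he: (CDidx v == CDidx u);
    rewrite ?CDmulNl (IH v u) /CDcommute /CDreal hu hv eq_sym he /= ?CDnegK //;
  move/eqP: hu => hu; move/eqP: hv => hv; move/eqP: he => he; congruence.
- by rewrite CDconjE; case: (CDreal v); rewrite ?CDmulN ?CDnegK.
- by rewrite CDconjE; case: (CDreal u); rewrite ?CDmulN ?CDnegK.
- by rewrite IH /CDcommute; case: ifP.
Qed.

Definition sign_parity n (f : CD n -> CD n) :=
  \big[addb/false]_(a | ~~ CDsign a) CDsign (f a).

Definition odd_map n (f : CD n -> CD n) := forall a, f (CDneg a) = CDneg (f a).

Lemma big_pos_pair (R : Type) (idx : R) (op : Monoid.com_law idx) m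
    (F : CD m.+1 -> R) :
  \big[op/idx]_(a : CD m.+1 | ~~ CDsign a) F a
  = \big[op/idx]_(v : CD m | ~~ CDsign v) op (F (v, true)) (F (v, false)).
Proof.
rewrite (eq_bigr (fun v => \big[op/idx]_(b : bool) F (v, b))); last first.
  by move=> v _; rewrite big_bool.
rewrite pair_big_dep /=; apply: eq_big => [[v b]|[]] //=; by rewrite andbT.
Qed.

(* Q_m has 2^m positive elements, an odd number only for m = 0. *)
Lemma parity_pos m : \big[addb/false]_(a : CD m | ~~ CDsign a) true = (m == 0).
Proof. by case: m => [|m]; [rewrite big_mkcond big_bool | rewrite big_pos_pair big1]. Qed.

Lemma parity_pos_const m (k : bool) :
  \big[addb/false]_(a : CD m | ~~ CDsign a) k = k && (m == 0).
Proof. by case: k; rewrite -?parity_pos // big1. Qed.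

Lemma CDsign_mul_conj n (u v : CD n) :
  CDsign (CDmul u (CDconj v)) = CDsign (CDmul u v) (+) ~~ CDreal v.
Proof.
by rewrite CDconjE; case: (CDreal v); rewrite ?CDmulN ?CDsign_neg ?addbT ?addbF.
Qed.

Lemma CDsign_conj_mul n (u v : CD n) :
  CDsign (CDmul (CDconj v) u) = CDsign (CDmul v u) (+) ~~ CDreal v.
Proof.
by rewrite CDconjE; case: (CDreal v); rewrite ?CDmulNl ?CDsign_neg ?addbT ?addbF.
Qed.

Lemma sign_parity_Lpair m (u : CD m) b :
  sign_parity (CDmul ((u, b) : CD m.+1))
  = sign_parity (CDmul u) (+) sign_parity (fun v => CDmul v u) (+) (b && (m == 0)).
Proof.
rewrite /sign_parity big_pos_pair /=; case: b => /=; last first.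
  by rewrite big_split /= addbC addbF.
rewrite (eq_bigr (fun v => CDsign (CDmul v u) (+) CDsign (CDmul u v) (+) true)).
  by rewrite !big_split /= parity_pos [X in X (+) _ = _]addbC.
move=> v _; rewrite CDsign_mul_conj CDsign_neg CDsign_conj_mul.
by case: (CDsign (CDmul v u)); case: (CDsign (CDmul u v)); case: (CDreal v).
Qed.

Lemma sign_parity_Rpair m (u : CD m) b :
  sign_parity (fun a : CD m.+1 => CDmul a (u, b))
  = (if b then CDreal u else ~~ CDreal u) && (m == 0).
Proof.
rewrite /sign_parity big_pos_pair /= -parity_pos_const; apply: eq_bigr => v _.
case: b; rewrite ?CDsign_neg ?CDsign_conj_mul ?CDsign_mul_conj.
  by case: (CDsign (CDmul u v)); case: (CDreal u).
by case: (CDsign (CDmul v u)); case: (CDreal u).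
Qed.

Lemma sign_parity0 (f : CD 0 -> CD 0) : sign_parity f = f false.
Proof. by rewrite /sign_parity big_mkcond big_bool. Qed.

Lemma sign_parity_translations m (x : CD m.+2) :
  sign_parity (CDmul x) = false /\ sign_parity (fun a => CDmul a x) = false.
Proof.
elim: m x => [|m IH] [u b].
  case: u => w c; rewrite sign_parity_Lpair !sign_parity_Rpair sign_parity_Lpair.
  rewrite !sign_parity0 /CDreal /=.
  by split; case: b; case: c; case: w.
have [Lu Ru] := IH u.
by rewrite sign_parity_Rpair sign_parity_Lpair Lu Ru !andbF.
Qed.

Lemma big_transversal (R : Type) (idx : R) (op : Monoid.com_law idx) n
    (P : pred (CD n)) (F : CD n -> R) :
  (forall a, P (CDneg a) = ~~ P a) -> (forall a, F (CDneg a) = F a) ->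
  \big[op/idx]_(a | P a) F a = \big[op/idx]_(a | ~~ CDsign a) F a.
Proof.
move=> PN FN; rewrite (bigID (fun a => ~~ CDsign a)) [RHS](bigID P) /=.
congr (op _ _); first by apply: eq_bigl => a; rewrite andbC.
rewrite (reindex_inj (@CDneg_inj n)) /=.
by apply: eq_big => a; rewrite ?PN ?CDsign_neg ?negbK 1?andbC ?FN.
Qed.

Definition CDabs n (b : CD n) := if CDsign b then CDneg b else b.

Lemma CDabs_neg n (b : CD n) : CDabs (CDneg b) = CDabs b.
Proof. by rewrite /CDabs CDsign_neg; case: (CDsign b); rewrite /= ?CDnegK. Qed.

Lemma sign_parity_mul n (p q : {perm CD n}) : odd_map p -> odd_map q ->
  sign_parity (p * q)%g = sign_parity p (+) sign_parity q.
Proof.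
move=> pN qN; rewrite /sign_parity.
have signq a : CDsign (q a) = CDsign a (+) CDsign (q (CDabs a)).
  by rewrite /CDabs; case: ifP => //= _; rewrite -{1}(CDnegK a) qN CDsign_neg.
rewrite (eq_bigr (fun a => CDsign (p a) (+) CDsign (q (CDabs (p a))))); last first.
  by move=> a _; rewrite permM signq.
rewrite big_split /=; congr addb.
rewrite [RHS](eq_bigr (fun b => CDsign (q (CDabs b)))); last first.
  by move=> b /negbTE pos_b; rewrite /CDabs pos_b.
rewrite [RHS](reindex_inj (@perm_inj _ p)) /=; symmetry.
by apply: big_transversal => a; rewrite pN ?CDsign_neg ?CDabs_neg.
Qed.

Lemma diag_perm_odd n (f : {perm CD n}) :
  (forall a, f a = a \/ f a = CDneg a) -> odd_map f.
Proof.
move=> fdiag a; have Na_neq_a : CDneg a != a by rewrite CDneg_neq.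
have [fa|fa] := fdiag a; have [fNa|fNa] := fdiag (CDneg a);
  rewrite ?fa ?fNa ?CDnegK //;
  by case/eqP: Na_neq_a; apply: (@perm_inj _ f); rewrite fa fNa ?CDnegK.
Qed.

(* For
   n >= 2 they form a group containing every translation, hence Mlt(Q_n). *)
Definition even_sign_perms n := [set f : {perm CD n} |
  [&& [forall a, f (CDneg a) == CDneg (f a)],
      [forall a, CDidx (f a) == CDidx_add (CDidx (f (CDone n))) (CDidx a)]
    & ~~ sign_parity f]].

Lemma even_sign_permsP n (f : {perm CD n}) :
  reflect [/\ odd_map f,
              forall a, CDidx (f a) = CDidx_add (CDidx (f (CDone n))) (CDidx a)
            & sign_parity f = false]
          (f \in even_sign_perms n).
Proof.
rewrite inE; apply: (iffP and3P) => [[/forallP fN /forallP fidx /negbTE fpar]|].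
  by split=> // a; apply/eqP.
by case=> fN fidx ->; split=> //; apply/forallP => a; apply/eqP.
Qed.

Lemma sign_parity1 n : sign_parity (1%g : {perm CD n}) = false.
Proof. by rewrite /sign_parity big1 // => a /negbTE; rewrite perm1. Qed.

Lemma even_sign_perms_group n : group_set (even_sign_perms n).
Proof.
apply/group_setP; split.
  by apply/even_sign_permsP; split=> [a|a|]; rewrite ?perm1 ?CDidx_add1 ?sign_parity1.
move=> f g /even_sign_permsP [fN fidx fpar] /even_sign_permsP [gN gidx gpar].
apply/even_sign_permsP; split=> [a|a|]; rewrite ?permM.
- by rewrite fN gN.
- by rewrite gidx fidx (gidx (f _)) CDidx_addA.
- by rewrite sign_parity_mul // fpar gpar.
Qed.

Canonical even_sign_perms_groupType n := Group (even_sign_perms_group n).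

Lemma mlt_gensP n (p : {perm CD n}) : p \in mlt_gens n ->
  (exists x, forall a, p a = CDmul x a) \/ (exists x, forall a, p a = CDmul a x).
Proof.
by rewrite inE => /orP [] /existsP [x /forallP px]; [left | right];
  exists x => a; apply/eqP.
Qed.

Lemma Mlt_even_sign m : Mlt m.+2 \subset even_sign_perms m.+2.
Proof.
rewrite /Mlt gen_subG; apply/subsetP => p /mlt_gensP [] [x px];
  apply/even_sign_permsP; split=> [a|a|]; rewrite ?px.
- by rewrite CDmulN.
- by rewrite CDmulx1 CDidx_mul.
- have -> : sign_parity p = sign_parity (CDmul x) by apply: eq_bigr => a _; rewrite px.
  exact: (sign_parity_translations x).1.
- by rewrite CDmulNl.
- by rewrite CDmul1 CDidx_mul CDidx_addC.
- have -> : sign_parity p = sign_parity (fun a => CDmul a x) by apply: eq_bigr => a _; rewrite px.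
  exact: (sign_parity_translations x).2.
Qed.

(* Q_1 is the cyclic group of order 4, so Mlt(Q_1) consists of left translations. *)
Definition left_translations1 :=
  [set f : {perm CD 1} | [forall a, f a == CDmul (f (CDone 1)) a]].

Lemma left_translations1_group : group_set left_translations1.
Proof.
apply/group_setP; split; first by rewrite inE; apply/forallP => a; rewrite !perm1 CDmul1.
move=> f g; rewrite !inE => /forallP fL /forallP gL; apply/forallP => a.
rewrite !permM (eqP (fL a)) (eqP (gL _)) (eqP (gL (f _))) (eqP (fL (CDone 1))).
by move: (g (CDone 1)) (f (CDone 1)) a => [[] []] [[] []] [[] []].
Qed.

Canonical left_translations1_groupType := Group left_translations1_group.

Lemma Mlt1_left : Mlt 1 \subset left_translations1.
Proof.
rewrite /Mlt gen_subG; apply/subsetP => p /mlt_gensP [] [x px];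
  rewrite inE; apply/forallP => a; rewrite !px; clear px;
  by move: x a => [[] []] [[] []].
Qed.

Lemma Inn_diag n (f : {perm CD n}) : 0 < n -> f \in Inn n ->
  (forall a, f a = a \/ f a = CDneg a) /\ sign_parity f = false.
Proof.
case: n f => [//|[|m]] f _; rewrite inE => /andP [fM /eqP f1].
  have : f \in left_translations1 by apply: (subsetP Mlt1_left).
  rewrite inE => /forallP fL.
  have -> : f = 1%g by apply/permP => a; rewrite (eqP (fL a)) f1 CDmul1 perm1.
  by rewrite sign_parity1; split=> // a; left; rewrite perm1.
have /even_sign_permsP [_ fidx fpar] := subsetP (Mlt_even_sign m) f fM.
by split=> // a; apply: CDidxP; rewrite fidx f1 CDidx_add1.
Qed.

Lemma pos_neg_free n (S : {set CD n}) :
  {subset S <= [pred a | ~~ CDsign a]} -> forall x, x \in S -> CDneg x \notin S.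
Proof.
move=> Spos x xS; apply/negP => /Spos; rewrite inE CDsign_neg negbK.
by move: (Spos x xS); rewrite inE => /negbTE ->.
Qed.

Lemma prod_tperm_seq n (s : seq (CD n)) a :
  uniq s -> (forall x, x \in s -> CDneg x \notin s) ->
  (\prod_(x <- s) tperm x (CDneg x))%g a
    = if (a \in s) || (CDneg a \in s) then CDneg a else a.
Proof.
elim: s a => [|x s IH] a /=; first by rewrite big_nil perm1.
move=> /andP [x'_s s_uniq] free.
have free_tl y : y \in s -> CDneg y \notin s.
  move=> ys; move: (free y (mem_behead (s := x :: s) ys)).
  by rewrite in_cons negb_or => /andP [].
have Nx'_s : CDneg x \notin s.
  by move: (free x (mem_head x s)); rewrite in_cons negb_or => /andP [].
rewrite big_cons permM IH // !in_cons.
case: tpermP => [->|->|/eqP ax /eqP aNx].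
- by rewrite CDnegK (negbTE x'_s) (negbTE Nx'_s) eqxx.
- by rewrite CDnegK (negbTE x'_s) (negbTE Nx'_s) !eqxx orbT.
by rewrite (negbTE ax) CDneg_eq (negbTE aNx).
Qed.

Definition flip n (S : {set CD n}) : {perm CD n} :=
  (\prod_(x in S) tperm x (CDneg x))%g.

Lemma flipE n (S : {set CD n}) a : (forall x, x \in S -> CDneg x \notin S) ->
  flip S a = if (a \in S) || (CDneg a \in S) then CDneg a else a.
Proof.
move=> free; rewrite /flip -big_filter prod_tperm_seq ?filter_uniq ?index_enum_uniq //.
  by rewrite !mem_filter !mem_index_enum !andbT.
by move=> x; rewrite !mem_filter !mem_index_enum !andbT; apply: free.
Qed.

Definition moved n (f : CD n -> CD n) := [set a | ~~ CDsign a && (f a != a)].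

Section DiagonalPermutations.
Variables (n : nat) (f : {perm CD n}).
Hypothesis fdiag : forall a, f a = a \/ f a = CDneg a.

Lemma diag_flip_moved : f = flip (moved f).
Proof.
have fN := diag_perm_odd fdiag.
apply/permP => a; rewrite flipE; last by apply: pos_neg_free => x; rewrite !inE => /andP [].
rewrite !inE CDsign_neg negbK fN.
have [->|->] := fdiag a; rewrite ?CDnegK ?eqxx ?andbF /=; first by case: (CDsign a).
by rewrite CDneg_neq eq_sym CDneg_neq; case: (CDsign a).
Qed.

Lemma diag_sign_parity : sign_parity f = odd #|moved f|.
Proof.
rewrite -sum1_card (big_morph odd oddD (erefl (odd 0))) /sign_parity /=.
rewrite big_mkcond [RHS]big_mkcond /=; apply: eq_bigr => a _; rewrite inE.
by have [->|->] := fdiag a; rewrite ?eqxx ?CDneg_neq ?CDsign_neg; case: (CDsign a).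
Qed.

End DiagonalPermutations.

Lemma moved_flip n (S : {set CD n}) :
  {subset S <= [pred a | ~~ CDsign a]} -> moved (flip S) = S.
Proof.
move=> Spos; have free := pos_neg_free Spos; apply/setP => a.
rewrite inE flipE //; case pos_a: (CDsign a) => /=.
  by apply/esym/negP => /Spos; rewrite inE pos_a.
have -> : (CDneg a \in S) = false.
  by apply/negP => /Spos; rewrite inE CDsign_neg pos_a.
by rewrite orbF; case: (a \in S); rewrite ?CDneg_neq ?eqxx.
Qed.

Definition Lperm n (x : CD n) : {perm CD n} := perm (CDmul_inj_both x).1.
Definition Rperm n (x : CD n) : {perm CD n} := perm (CDmul_inj_both x).2.

Lemma Lperm_Mlt n (x : CD n) : Lperm x \in Mlt n.
Proof.
apply: mem_gen; rewrite inE; apply/orP; left; apply/existsP; exists x.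
by apply/forallP => a; rewrite permE.
Qed.

Lemma Rperm_Mlt n (x : CD n) : Rperm x \in Mlt n.
Proof.
apply: mem_gen; rewrite inE; apply/orP; right; apply/existsP; exists x.
by apply/forallP => a; rewrite permE.
Qed.

Lemma Inn_group n : group_set (Inn n).
Proof.
apply/group_setP; split; first by rewrite inE group1 perm1 eqxx.
move=> f g; rewrite !inE => /andP [fM /eqP f1] /andP [gM /eqP g1].
by rewrite groupM //= permM f1 g1.
Qed.

Canonical Inn_groupType n := Group (Inn_group n).

(* T_x = L_x^-1 R_x : a |-> x \ (a x) fixes the elements commuting with x and
   negates the others. *)
Definition Tperm n (x : CD n) : {perm CD n} := (Rperm x * (Lperm x)^-1)%g.

Lemma TpermE n (x a : CD n) : Tperm x a = if CDcommute x a then a else CDneg a.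
Proof.
have Lx y : CDmul x y = Lperm x y by rewrite permE.
have Rx : Rperm x a = CDmul a x by rewrite permE.
rewrite permM Rx CDmul_comm; case: ifP => _; last rewrite -CDmulN.
all: by rewrite Lx permK.
Qed.

Lemma Tperm_Inn n (x : CD n) : Tperm x \in Inn n.
Proof.
by rewrite inE groupM ?groupV ?Lperm_Mlt ?Rperm_Mlt //= TpermE /CDcommute /CDreal eqxx.
Qed.

Lemma prod_Tperm_seq n (s : seq (CD n)) a :
  (\prod_(x <- s) Tperm x)%g a
    = if odd (count (fun x => ~~ CDcommute x a) s) then CDneg a else a.
Proof.
elim: s a => [|x s IH] a /=; first by rewrite big_nil perm1.
rewrite big_cons permM TpermE; case: (CDcommute x a) => /=; first by rewrite IH.
rewrite IH (eq_count (a2 := fun y => ~~ CDcommute y a)); last first.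
  by move=> y; rewrite CDcommute_neg.
by case: (odd _); rewrite ?CDnegK.
Qed.

Lemma anticommuteE n (x a : CD n) : ~~ CDreal x ->
  ~~ CDcommute x a = ~~ CDreal a && ~~ ((a == x) || (a == CDneg x)).
Proof. by move=> /negbTE imag_x; rewrite /CDcommute imag_x CDidx_eq negb_or. Qed.

Lemma count_anticommute n (s : seq (CD n)) a : uniq s ->
  (forall x, x \in s -> ~~ CDsign x && ~~ CDreal x) ->
  odd (count (fun x => ~~ CDcommute x a) s)
    = ~~ CDreal a && (odd (size s) (+) ((a \in s) || (CDneg a \in s))).
Proof.
elim: s => [|x s IH] /=; first by rewrite andbF.
move=> /andP [x'_s s_uniq] s_imag.
have /andP [pos_x imag_x] := s_imag x (mem_head x s).
have Nx'_s : CDneg x \notin s.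
  apply/negP => /(mem_behead (s := x :: s))/s_imag.
  by rewrite CDsign_neg (negbTE pos_x).
have {}IH := IH s_uniq (fun y ys => s_imag y (mem_behead (s := x :: s) ys)).
rewrite oddD IH anticommuteE // !in_cons CDneg_eq.
case: (CDreal a) => //=.
have [->|_] := eqVneq a x.
  rewrite [x == _]eq_sym CDneg_neq (negbTE x'_s) (negbTE Nx'_s) /=.
  by case: (odd _).
have [->|_] /= := eqVneq a (CDneg x).
  by rewrite CDnegK (negbTE x'_s) (negbTE Nx'_s) /=; case: (odd _).
by case: (odd _); case: (_ || _).
Qed.

Lemma diag_abelem n (G : {group {perm CD n}}) :
  (forall f, f \in G -> forall a, f a = a \/ f a = CDneg a) -> (2.-abelem G)%g.
Proof.
move=> Gdiag; apply/(abelemP (isT : prime 2)); split.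
  apply/centsP => f fG g gG; apply/permP => a; rewrite !permM.
  have fN := diag_perm_odd (Gdiag f fG); have gN := diag_perm_odd (Gdiag g gG).
  have [fa|fa] := Gdiag f fG a; have [ga|ga] := Gdiag g gG a;
    by rewrite ?fa ?ga ?fN ?gN ?fa ?ga.
move=> f fG; apply/permP => a; rewrite expgS expg1 permM perm1.
by have [fa|fa] := Gdiag f fG a; rewrite fa ?(diag_perm_odd (Gdiag f fG)) fa ?CDnegK.
Qed.

Definition pos_imag n := [set a : CD n | ~~ CDsign a & a != CDone n].

Lemma CDsign1 n : CDsign (CDone n) = false.
Proof. by elim: n. Qed.

Lemma pos_imagP n (a : CD n) : a \in pos_imag n -> ~~ CDsign a && ~~ CDreal a.
Proof.
rewrite inE => /andP [pos_a a_neq1]; rewrite pos_a /=.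
apply/negP => /eqP/esym/CDidxP [a1|a1]; first by rewrite a1 eqxx in a_neq1.
by rewrite a1 CDsign_neg CDsign1 in pos_a.
Qed.

Definition even_pos_imag n :=
  [set S : {set CD n} | (S \subset pos_imag n) && ~~ odd #|S|].

Lemma even_pos_imag_pos n (S : {set CD n}) :
  S \in even_pos_imag n -> {subset S <= [pred a | ~~ CDsign a]}.
Proof.
rewrite inE => /andP [/subsetP S_imag _] x /S_imag /pos_imagP.
by rewrite inE => /andP [].
Qed.

(* Lower bound: the flip of an even set S of positive non-real elements is the
   product of the T_x, x in S, since a non-real a anticommutes with |S| - 1
   (odd) of them if a or -a lies in S and with all |S| (even) of them if not. *)
Lemma flip_prod_Tperm n (S : {set CD n}) :
  S \in even_pos_imag n -> flip S = (\prod_(x in S) Tperm x)%g.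
Proof.
move=> S_even; have free := pos_neg_free (even_pos_imag_pos S_even).
move: S_even; rewrite inE => /andP [/subsetP S_imag S_even].
apply/permP => a; rewrite flipE // -big_filter prod_Tperm_seq count_anticommute; first last.
- by move=> x; rewrite mem_filter => /andP [/S_imag/pos_imagP].
- by rewrite filter_uniq // index_enum_uniq.
rewrite -cardE (negbTE S_even) /= !mem_filter !mem_index_enum !andbT.
case real_a: (CDreal a) => //=.
have not_in b : CDreal b -> b \in S = false.
  by move=> real_b; apply/negP => /S_imag/pos_imagP; rewrite real_b andbF.
by rewrite !not_in ?CDreal_neg.
Qed.

Lemma flip_Inn n (S : {set CD n}) : S \in even_pos_imag n -> flip S \in Inn n.
Proof.
move=> S_even; rewrite flip_prod_Tperm //.
by apply: (@group_prod _ (Inn_groupType n)) => x _; apply: Tperm_Inn.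
Qed.

Lemma Inn_flips n : 0 < n -> Inn n = @flip n @: even_pos_imag n.
Proof.
move=> n_gt0; apply/setP => f; apply/idP/imsetP => [fInn|[S S_even ->]]; last first.
  exact: flip_Inn.
have [fdiag fpar] := Inn_diag n_gt0 fInn.
move: fInn; rewrite inE => /andP [_ /eqP f1].
exists (moved f); last exact: diag_flip_moved.
rewrite inE -diag_sign_parity // fpar andbT; apply/subsetP => a.
rewrite !inE => /andP [-> fa_neq_a] /=.
by apply: contra fa_neq_a => /eqP ->; rewrite f1.
Qed.

Lemma flip_inj n : {in even_pos_imag n &, injective (@flip n)}.
Proof.
move=> S T /even_pos_imag_pos Spos /even_pos_imag_pos Tpos flipST.
by rewrite -(moved_flip Spos) -(moved_flip Tpos) flipST.
Qed.

(* A nonempty finite set A has 2^(|A| - 1) subsets of even size: toggling a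
   fixed element of A exchanges the even and the odd subsets. *)
Lemma card_even_subsets (T : finType) (A : {set T}) : 0 < #|A| ->
  #|[set S : {set T} | (S \subset A) && ~~ odd #|S|]| = 2 ^ #|A|.-1.
Proof.
move=> /card_gt0P [a0 a0A].
pose toggle (S : {set T}) := if a0 \in S then S :\ a0 else a0 |: S.
have toggleK : involutive toggle.
  move=> S; rewrite /toggle; have [a0S|a0S] := boolP (a0 \in S).
    by rewrite setD11 setD1K.
  by rewrite setU11 setU1K.
have toggle_odd S : odd #|toggle S| = ~~ odd #|S|.
  rewrite /toggle; case: ifP => a0S; last by rewrite cardsU1 a0S.
  by rewrite [in RHS](cardsD1 a0) a0S /= negbK.
have toggle_sub S : (toggle S \subset A) = (S \subset A).
  rewrite /toggle; case: ifP => a0S; last by rewrite subUset sub1set a0A.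
  by rewrite -{2}(setD1K a0S) subUset sub1set a0A.
set E := [set S | _]; set O := [set S : {set T} | (S \subset A) && odd #|S|].
have toggleE : toggle @: E = O.
  apply/setP => S; apply/imsetP/idP => [[S' S'E ->]|SO].
    by move: S'E; rewrite !inE toggle_sub toggle_odd.
  exists (toggle S); last by rewrite toggleK.
  by move: SO; rewrite !inE toggle_sub toggle_odd negbK.
have EO_powerset : #|E| + #|O| = 2 ^ #|A|.
  rewrite -card_powerset -cardsUI.
  have -> : E :&: O = set0.
    by apply/setP => S; rewrite !inE; case: (odd _); rewrite !andbF.
  rewrite cards0 addn0; apply: eq_card => S; rewrite !inE.
  by case: (S \subset A); case: (odd _).
move: EO_powerset; rewrite -toggleE card_imset; last exact: inv_inj.
rewrite addnn (cardsD1 a0 A) a0A /= expnS -muln2 mulnC => /eqP.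
by rewrite eqn_mul2l /= => /eqP.
Qed.

Lemma card_pos n : #|[set a : CD n | ~~ CDsign a]| = 2 ^ n.
Proof.
rewrite -sum1dep_card; elim: n => [|m IH]; first by rewrite big_mkcond big_bool.
by rewrite big_pos_pair big_split /= IH expnS mul2n addnn.
Qed.

Lemma card_pos_imag n : #|pos_imag n| = 2 ^ n - 1.
Proof.
rewrite -(card_pos n) (cardsD1 (CDone n) [set a | ~~ CDsign a]) inE CDsign1 /=.
by rewrite add1n subSS subn0; apply: eq_card => a; rewrite !inE andbC.
Qed.

Theorem mainTheorem5 (n : nat) (hn : 0 < n) :
  [/\ (2.-abelem (Inn n))%g,
      #|Inn n| = 2 ^ (2 ^ n - 2)
    & forall f : {perm CD n}, f \in Inn n ->
        exists S : {set CD n},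
          (forall x : CD n, x \in S -> CDneg x \notin S) /\
          f = (\prod_(x in S) tperm x (CDneg x))%g ].
Proof.
split.
- apply: (@diag_abelem n (Inn_groupType n)) => f fInn.
  by have [] := Inn_diag hn fInn.
- have pos_imag_gt0 : 0 < #|pos_imag n|.
    by rewrite card_pos_imag subn_gt0 -{1}(expn0 2) ltn_exp2l.
  rewrite Inn_flips // card_in_imset; last exact: flip_inj.
  by rewrite card_even_subsets // card_pos_imag -subn1 -subnDA.
move=> f; rewrite Inn_flips // => /imsetP [S S_even ->].
by exists S; split; first exact: pos_neg_free (even_pos_imag_pos S_even).
Qed.
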